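(* Let $\mathbf{A}$ be a countable UL-chain and let $\mathscr{K}_1$ be the class of all finite $\mathbf{A}$-structures $\langle\mathbf{A},\mathbf{M}\rangle$ in the language with a single binary relation symbol $<$ such that for all $a,b\in M$: (1.1) $\|a<a\|^{\mathbf{A}}_{\mathbf{M}}<\bar 1$, and (1.2) $\|a<b\to b<a\|^{\mathbf{A}}_{\mathbf{M}}\ge\bar 1$. Then $\mathscr{K}_1^{\cong}$ is a Fraïssé class, i.e. a countable set of finitely generated $\mathbf{A}$-structures having the hereditary property, the joint embedding property and the amalgamation property.
   Context: A UL-algebra is $\mathbf{A}=\langle A,\wedge,\vee,\&,\to,\bar 0,\bar 1,\bot,\top\rangle$ where $\langle A,\wedge,\vee,\bot,\top\rangle$ is a bounded lattice, $\langle A,\&,\bar 1\rangle$ is a commutative monoid, $a\& b\le c$ iff $b\le a\to c$, and $((a\to b)\wedge\bar 1)\vee((b\to a)\wedge \bar 1)=\bar 1$; a UL-chain is one with linear order. An $\mathbf{A}$-structure for $\{<\}$ is a set $M$ with a function $<_{\mathbf{M}}:M^2\to A$, $\|a<b\|^{\mathbf{A}}_{\mathbf{M}}=<_{\mathbf{M}}(a,b)$, compound formulas evaluated by the operations of $\mathbf{A}$. Substructure: subset with restricted relation. Embedding: injective map preserving the values of $<$, identity on $\mathbf{A}$; isomorphism: surjective embedding. $\mathscr{K}^{\cong}$: one representative of each isomorphism type in $\mathscr{K}$. Hereditary property: closed under substructures (up to isomorphism). Joint embedding property: any two members embed into a common member. Amalgamation property: whenever $\mathbf{M}_0$ is a substructure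 of both $\mathbf{M}_1$ and $\mathbf{M}_2$, all in the class, there are a member $\mathbf{M}_3$ and embeddings $f_1:\mathbf{M}_1\to\mathbf{M}_3$, $f_2:\mathbf{M}_2\to\mathbf{M}_3$ agreeing on $M_0$. *)

From mathcomp Require Import all_boot.
Set Implicit Arguments. Unset Strict Implicit. Unset Printing Implicit Defensive.

Record ULAlgebra := {
  ul_car :> Type;
  ul_meet : ul_car -> ul_car -> ul_car;
  ul_join : ul_car -> ul_car -> ul_car;
  ul_conj : ul_car -> ul_car -> ul_car;
  ul_imp  : ul_car -> ul_car -> ul_car;
  ul_zero : ul_car;
  ul_one  : ul_car;
  ul_bot  : ul_car;
  ul_top  : ul_car;
  ul_meetA : forall a b c, ul_meet a (ul_meet b c) = ul_meet (ul_meet a b) c;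
  ul_meetC : forall a b, ul_meet a b = ul_meet b a;
  ul_joinA : forall a b c, ul_join a (ul_join b c) = ul_join (ul_join a b) c;
  ul_joinC : forall a b, ul_join a b = ul_join b a;
  ul_meet_join : forall a b, ul_meet a (ul_join a b) = a;
  ul_join_meet : forall a b, ul_join a (ul_meet a b) = a;
  ul_bot_le : forall a, ul_meet ul_bot a = ul_bot;
  ul_le_top : forall a, ul_meet a ul_top = a;
  ul_conjA : forall a b c, ul_conj a (ul_conj b c) = ul_conj (ul_conj a b) c;
  ul_conjC : forall a b, ul_conj a b = ul_conj b a;
  ul_conj1 : forall a, ul_conj a ul_one = a;
  (* residuation: a & b <= c  iff  b <= a -> c, where x <= y := x /\ y = x *)
  ul_resid : forall a b c,
    ul_meet (ul_conj a b) c = ul_conj a b <-> ul_meet b (ul_imp a c) = b;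
  ul_prelin : forall a b,
    ul_join (ul_meet (ul_imp a b) ul_one) (ul_meet (ul_imp b a) ul_one) = ul_one
}.

Definition ul_le (A : ULAlgebra) (a b : A) : Prop := ul_meet a b = a.
Definition ul_lt (A : ULAlgebra) (a b : A) : Prop := ul_le a b /\ a <> b.

Definition ul_chain (A : ULAlgebra) : Prop := forall a b : A, ul_le a b \/ ul_le b a.

Definition countable_carrier (A : ULAlgebra) : Prop :=
  exists f : A -> nat, forall a b, f a = f b -> a = b.

Record FinStr (A : ULAlgebra) := {
  fs_car :> finType;
  fs_lt : fs_car -> fs_car -> A
}.

Definition val_lt (A : ULAlgebra) (M : FinStr A) (a b : M) : A := fs_lt a b.

Definition embedding (A : ULAlgebra) (M N : FinStr A) (f : M -> N) : Prop :=
  injective f /\ forall a b : M, fs_lt (f a) (f b) = fs_lt a b.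
Definition isomorphism (A : ULAlgebra) (M N : FinStr A) (f : M -> N) : Prop :=
  embedding f /\ forall y : N, exists x : M, f x = y.
Definition isomorphic (A : ULAlgebra) (M N : FinStr A) : Prop :=
  exists f : M -> N, isomorphism f.

Definition substructure (A : ULAlgebra) (M : FinStr A) (S : {set M}) : FinStr A :=
  {| fs_car := {x : M | x \in S};
     fs_lt := fun x y => fs_lt (sval x) (sval y) |}.

Definition K1 (A : ULAlgebra) (M : FinStr A) : Prop :=
  (forall a : M, ul_lt (val_lt a a) (ul_one A)) /\
  (forall a b : M, ul_le (ul_one A) (ul_imp (val_lt a b) (val_lt b a))).

Definition countably_many_iso_types (A : ULAlgebra) (K : FinStr A -> Prop) : Prop :=
  exists e : nat -> FinStr A,
    (forall n, K (e n)) /\ (forall M, K M -> exists n, isomorphic M (e n)).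

Definition hereditary (A : ULAlgebra) (K : FinStr A -> Prop) : Prop :=
  forall (M : FinStr A) (S : {set M}), K M -> K (substructure S).

Definition joint_embedding (A : ULAlgebra) (K : FinStr A -> Prop) : Prop :=
  forall M1 M2 : FinStr A, K M1 -> K M2 ->
    exists (M3 : FinStr A) (f1 : M1 -> M3) (f2 : M2 -> M3),
      K M3 /\ embedding f1 /\ embedding f2.

(* M0 is (embedded as) a substructure of M1 and of M2 via g1, g2 *)
Definition amalgamation (A : ULAlgebra) (K : FinStr A -> Prop) : Prop :=
  forall (M0 M1 M2 : FinStr A) (g1 : M0 -> M1) (g2 : M0 -> M2),
    K M0 -> K M1 -> K M2 -> embedding g1 -> embedding g2 ->
    exists (M3 : FinStr A) (f1 : M1 -> M3) (f2 : M2 -> M3),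
      K M3 /\ embedding f1 /\ embedding f2 /\ (forall x, f1 (g1 x) = f2 (g2 x)).

(* finite relational structures are finitely generated, so the Fraisse-class
   condition reduces to the following four properties *)
Definition fraisse_class (A : ULAlgebra) (K : FinStr A -> Prop) : Prop :=
  countably_many_iso_types K /\ hereditary K /\ joint_embedding K /\ amalgamation K.

(* By residuation, 1bar <= (x -> y) iff x <= y, so condition (1.2) applied to
   (a, b) and to (b, a) says exactly that <_M is symmetric: K1 is the class of
   finite symmetric A-valued relations whose diagonal lies strictly below 1bar.  Such conditions are
   reflected by value-preserving maps, which gives heredity.  Amalgamation is
   free: glue M1 and M2 along M0 and give the new cross pairs an arbitrary
   value; joint embedding is amalgamation over the empty structure.  Finally,
   a structure on n points is determined up to isomorphism by the n x n matrix
   of the codes of its values in the countable A, which yields a countable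
   list of representatives. *)

From Stdlib Require Import ClassicalEpsilon.
From mathcomp Require Import all_boot.

Set Implicit Arguments. Unset Strict Implicit. Unset Printing Implicit Defensive.

Section IsoClosedClass.
Variable A : ULAlgebra.
Implicit Types (M N : FinStr A).

Definition empty_struct : FinStr A :=
  {| fs_car := void; fs_lt := fun x _ => of_void A x |}.

Lemma of_void_embedding M : embedding (@of_void M : empty_struct -> M).
Proof. by split; case. Qed.

Definition struct_of_code (g : nat -> A) (s : seq (seq nat)) : FinStr A :=
  {| fs_car := 'I_(size s); fs_lt := fun i j => g (nth 0 (nth [::] s i) j) |}.

Definition code_of_struct (f : A -> nat) M : seq (seq nat) :=
  [seq [seq f (fs_lt x y) | y <- enum M] | x <- enum M].

Lemma isomorphic_struct_of_code (f : A -> nat) (g : nat -> A) M :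
  cancel f g -> isomorphic M (struct_of_code g (code_of_struct f M)).
Proof.
move=> fK; have size_code : size (code_of_struct f M) = #|M|.
  by rewrite size_map -cardE.
exists (fun x => cast_ord (esym size_code) (enum_rank x)); split; first split.
- by move=> x y /(congr1 val) /= /val_inj /enum_rank_inj.
- move=> x y /=; rewrite (nth_map x) -?cardE ?ltn_ord // nth_enum_rank.
  by rewrite (nth_map y) -?cardE ?ltn_ord // nth_enum_rank fK.
- move=> i; exists (enum_val (cast_ord size_code i)).
  by apply: val_inj; rewrite /= enum_valK.
Qed.

Lemma countable_carrier_cancel :
  countable_carrier A -> exists (f : A -> nat) (g : nat -> A), cancel f g.
Proof.
case=> f f_inj; pose g n := epsilon (inhabits (ul_one A)) (fun a => f a = n).
exists f, g => a; apply: f_inj.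
by apply: (epsilon_spec _ (fun b => f b = f a)); exists a.
Qed.

Variable K : FinStr A -> Prop.
Hypothesis K_empty : K empty_struct.
Hypothesis K_iso : forall M N (h : M -> N), isomorphism h -> K M -> K N.

Definition code_enum (g : nat -> A) (n : nat) : FinStr A :=
  let M := struct_of_code g (odflt [::] (unpickle n)) in
  if excluded_middle_informative (K M) then M else empty_struct.

Lemma code_enumP g n : K (code_enum g n).
Proof. by rewrite /code_enum; case: excluded_middle_informative. Qed.

Lemma countably_many_iso_types_of_iso_closed :
  countable_carrier A -> countably_many_iso_types K.
Proof.
move=> /countable_carrier_cancel[f [g fK]]; exists (code_enum g); split=> [|M KM].
  exact: code_enumP.
have [h iso_h] := isomorphic_struct_of_code M fK.
exists (pickle (code_of_struct f M)); rewrite /code_enum pickleK /=.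
case: excluded_middle_informative => [? | []]; first by exists h.
exact: K_iso iso_h KM.
Qed.

Lemma joint_embedding_of_amalgamation :
  amalgamation K -> joint_embedding K.
Proof.
move=> AP M1 M2 KM1 KM2.
have [M3 [f1 [f2 [KM3 [f1_emb [f2_emb _]]]]]] :=
  AP _ _ _ _ _ K_empty KM1 KM2 (of_void_embedding M1) (of_void_embedding M2).
by exists M3, f1, f2.
Qed.

End IsoClosedClass.

Section K1Theory.
Variable A : ULAlgebra.
Implicit Types (a b : A) (M N : FinStr A).

Lemma ul_le_refl a : ul_le a a.
Proof. by rewrite /ul_le -{2}(ul_join_meet a a) ul_meet_join. Qed.

Lemma ul_le_anti a b : ul_le a b -> ul_le b a -> a = b.
Proof. by rewrite /ul_le => ab ba; rewrite -ab ul_meetC ba. Qed.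

Lemma ul_one_le_imp a b : ul_le (ul_one A) (ul_imp a b) <-> ul_le a b.
Proof. by rewrite /ul_le -(ul_resid a (ul_one A) b) ul_conj1. Qed.

Lemma K1P M :
  K1 M <-> (forall x : M, ul_lt (fs_lt x x) (ul_one A)) /\
           (forall x y : M, fs_lt x y = fs_lt y x).
Proof.
rewrite /K1 /val_lt; split=> -[diag H]; split=> // x y.
  by apply: ul_le_anti; apply/ul_one_le_imp.
by apply/ul_one_le_imp; rewrite H; apply: ul_le_refl.
Qed.

Lemma K1_pullback M N (f : M -> N) :
  (forall x y, fs_lt (f x) (f y) = fs_lt x y) -> K1 N -> K1 M.
Proof. by move=> Hf /K1P[diag sym]; apply/K1P; split=> *; rewrite -!Hf. Qed.

Lemma K1_pushforward M N (f : M -> N) :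
  (forall y, exists x, f x = y) -> (forall x y, fs_lt (f x) (f y) = fs_lt x y) ->
  K1 M -> K1 N.
Proof.
move=> f_onto Hf /K1P[diag sym]; apply/K1P; split=> [y|y y'].
  by have [x <-] := f_onto y; rewrite Hf.
by have [x <-] := f_onto y; have [x' <-] := f_onto y'; rewrite !Hf.
Qed.

Lemma K1_embedding M N (f : M -> N) : embedding f -> K1 N -> K1 M.
Proof. by case=> _; apply: K1_pullback. Qed.

Lemma K1_isomorphism M N (f : M -> N) : isomorphism f -> K1 M -> K1 N.
Proof. by case=> -[_ Hf] f_onto; apply: K1_pushforward. Qed.

Lemma K1_empty_struct : K1 (empty_struct A).
Proof. by apply/K1P; split; case. Qed.

End K1Theory.

Lemma pick_preimage_inj (T : finType) (U : eqType) (h : T -> U) :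
  injective h -> forall x, [pick x' | h x' == h x] = Some x.
Proof. by move=> h_inj x; case: pickP => [x' /eqP /h_inj -> | /(_ x)]; rewrite ?eqxx. Qed.

Section Amalgam.
Variables (A : ULAlgebra) (M0 M1 M2 : FinStr A) (g1 : M0 -> M1) (g2 : M0 -> M2).
Hypotheses (g1_emb : embedding g1) (g2_emb : embedding g2).

(* The amalgam lives on M1 + M2: a point [g2 x] of M2 is represented by
   [inl (g1 x)], its copy [inr (g2 x)] being a harmless extra point.  Pairs
   across M1 and M2 that do not come from M0 get the value 1bar; K1 only
   constrains the diagonal and symmetry, so any value would do. *)
Definition amalgam_lt (p q : M1 + M2) : A :=
  match p, q with
  | inl a, inl b | inr a, inr b => fs_lt a b
  | inl a, inr b =>
      if [pick x | g1 x == a] is Some x then fs_lt (g2 x) b else ul_one A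
  | inr b, inl a =>
      if [pick x | g1 x == a] is Some x then fs_lt b (g2 x) else ul_one A
  end.

Definition amalgam : FinStr A := {| fs_car := (M1 + M2)%type; fs_lt := amalgam_lt |}.

Definition amalgam_inl (a : M1) : amalgam := inl a.

Definition amalgam_inr (b : M2) : amalgam :=
  if [pick x | g2 x == b] is Some x then inl (g1 x) else inr b.

Lemma amalgam_K1 : K1 M1 -> K1 M2 -> K1 amalgam.
Proof.
move=> /K1P[diag1 sym1] /K1P[diag2 sym2]; apply/K1P; split; first by case.
by case=> a [] b /=; [apply: sym1 | case: (pick _) => //.. | apply: sym2].
Qed.

Lemma amalgam_inl_embedding : embedding amalgam_inl.
Proof. by split=> // a b []. Qed.

Lemma amalgam_inr_embedding : embedding amalgam_inr.
Proof.
have [[g1_inj g1_lt] [g2_inj g2_lt]] := (g1_emb, g2_emb).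
have g1_pick := pick_preimage_inj g1_inj.
split=> [b b'|b b']; rewrite /amalgam_inr.
  case: pickP => [x /eqP <-|_]; case: pickP => [x' /eqP <-|_] //=.
  - by case=> /g1_inj ->.
  - by case.
case: pickP => [x /eqP <-|_]; case: pickP => [x' /eqP <-|_] //=.
- by rewrite g1_lt g2_lt.
- by rewrite g1_pick.
- by rewrite g1_pick.
Qed.

Lemma amalgam_commutes x : amalgam_inl (g1 x) = amalgam_inr (g2 x).
Proof. by rewrite /amalgam_inr pick_preimage_inj //; case: g2_emb. Qed.

End Amalgam.

Lemma K1_amalgamation (A : ULAlgebra) : amalgamation (@K1 A).
Proof.
move=> M0 M1 M2 g1 g2 _ K1M1 K1M2 g1_emb g2_emb.
exists (amalgam g1 g2), (amalgam_inl g1 g2), (amalgam_inr g1 g2).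
split; first exact: amalgam_K1.
split; first exact: amalgam_inl_embedding.
split; first exact: amalgam_inr_embedding.
exact: amalgam_commutes.
Qed.

Theorem proposition2 (A : ULAlgebra) :
  ul_chain A -> countable_carrier A -> fraisse_class (@K1 A).
Proof.
move=> _ A_countable.
split; first exact: countably_many_iso_types_of_iso_closed (K1_empty_struct A)
  (@K1_isomorphism A) A_countable.
split; first by move=> M S; apply: K1_embedding; split=> // x y /val_inj.
split; last exact: K1_amalgamation.
exact: joint_embedding_of_amalgamation (K1_empty_struct A) (@K1_amalgamation A).
Qed.
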